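(* Let $m\ge 2$, let the key set $\{k_1,\dots,k_m\}$ be $\epsilon$-JL with $\epsilon\le\frac{1}{m^2(m-1)}$, and let the values satisfy $\langle v_i,v_i\rangle=1$ for all $i$ and $|\langle v_i,v_j\rangle|\le\alpha$ for all $i\neq j$, where $\alpha<\frac{m-1}{m+1}$. Then for every $m$-repetitive MQAR stream over $S$, every $0\le t\le N$, and every $i$ with $r_i^{(t)}>0$, the decoding step applied to the query $k_i$ and the gradient-descent state $W^{(t)}$ outputs exactly $v_i$. Thus gradient descent with decoding solves $m$-repetitive MQAR exactly using a state of $d^2$ parameters.
   Context: All vectors are row vectors in $\mathbb{R}^{1\times d}$. Fix $m\ge 1$ and a set $S=\{(k_1,v_1),\dots,(k_m,v_m)\}$ with $k_1,\dots,k_m\in\mathbb{R}^{1\times d}$ pairwise distinct and $v_1,\dots,v_m\in\mathbb{R}^{1\times d}$. An $m$-repetitive MQAR stream is a sequence $(k^{(1)},v^{(1)}),\dots,(k^{(N)},v^{(N)})$ with $(k^{(t)},v^{(t)})\in S$ for every $t$. For $0\le t\le N$ and $i\in\{1,\dots,m\}$, $r_i^{(t)}$ denotes the number of $s\in\{1,\dots,t\}$ with $(k^{(s)},v^{(s)})=(k_i,v_i)$. The key set is $\epsilon$-JL if $\langle k_i,k_i\rangle=1$ for all $i$ and $|\langle k_i,k_j\rangle|\le\epsilon$ for all $i\neq j$. The gradient-descent (delta-rule) state is the sequence of matrices $W^{(t)}\in\mathbb{R}^{d\times d}$ defined by $W^{(0)}=0$ and $W^{(t+1)}=W^{(t)}-(k^{(t+1)})^{\top}k^{(t+1)}W^{(t)}+(k^{(t+1)})^{\top}v^{(t+1)}$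 for $0\le t<N$. Decoding step: given a query $k_i$ and a state $W$, output $v_{i^*}$ where $i^*=\arg\max_{i'\in\{1,\dots,m\}}\langle v_{i'},k_iW\rangle$. *)

From HB Require Import structures.
From mathcomp Require Import all_boot all_order all_algebra.
From mathcomp Require Import reals.
Set Implicit Arguments. Unset Strict Implicit. Unset Printing Implicit Defensive.
Import Order.TTheory GRing.Theory Num.Theory.
Local Open Scope ring_scope.

Definition dotv (R : realType) (d : nat) (a b : 'rV[R]_d) : R := (a *m b^T) 0 0.

Definition gd_step (R : realType) (d : nat) (W : 'M[R]_d) (kv : 'rV[R]_d * 'rV[R]_d)
  : 'M[R]_d := W - (kv.1)^T *m kv.1 *m W + (kv.1)^T *m kv.2.

Definition gd_state (R : realType) (d : nat) (st : seq ('rV[R]_d * 'rV[R]_d)) (t : nat)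
  : 'M[R]_d := foldl (@gd_step R d) 0 (take t st).

Definition rcount (R : realType) (d : nat) (st : seq ('rV[R]_d * 'rV[R]_d))
  (p : 'rV[R]_d * 'rV[R]_d) (t : nat) : nat := count (pred1 p) (take t st).

Definition eps_JL (R : realType) (d m : nat) (k : 'I_m -> 'rV[R]_d) (eps : R) : Prop :=
  (forall i, dotv (k i) (k i) = 1) /\
  (forall i j, i != j -> `|dotv (k i) (k j)| <= eps).

Definition mqar_stream (R : realType) (d m : nat) (k v : 'I_m -> 'rV[R]_d)
  (st : seq ('rV[R]_d * 'rV[R]_d)) : Prop :=
  forall p, p \in st -> exists i : 'I_m, p = (k i, v i).

(* The decoding step on query q and state W outputs x: whichever
   i* = argmax_{i'} <v_{i'}, q W> is selected, v_{i*} = x. *)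
Definition decodes_to (R : realType) (d m : nat) (v : 'I_m -> 'rV[R]_d)
  (q : 'rV[R]_d) (W : 'M[R]_d) (x : 'rV[R]_d) : Prop :=
  forall istar : 'I_m,
    (forall j : 'I_m, dotv (v j) (q *m W) <= dotv (v istar) (q *m W)) ->
    v istar = x.

From HB Require Import structures.
From mathcomp Require Import all_boot all_order all_algebra.
From mathcomp Require Import reals.
From mathcomp Require Import ring lra.
Import Order.TTheory GRing.Theory Num.Theory.
Local Open Scope ring_scope.
Set Implicit Arguments. Unset Strict Implicit. Unset Printing Implicit Defensive.

(* Write the readout of the state on each key as
   [k_i W = v_i + sum_l E_il v_l]; initially [E = -I].  A delta-rule step on
   [(k_j, v_j)] replaces row [i] of [E] by [E_i - <k_i,k_j> E_j]: row [j] is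
   wiped out and every other row grows by at most [eps |E_j|_1], while the
   total l1-mass [S] drops by at least [c |E_j|_1], [c = 1 - (m-1) eps].
   Hence [c |E_i|_1 + eps S] never increases and is at most [eps m] once
   [k_i] has been written, so [(m-1) |E_i|_1 < 1].  A correction that small
   cannot let any [v_b], [b <> i], overtake [v_i] in the decoding scores,
   since the value set is [alpha]-incoherent with [alpha < (m-1)/(m+1)]. *)

Section InnerProduct.
Variables (R : realType) (d : nat).
Implicit Types (a b c : 'rV[R]_d).

Lemma dotvC a b : dotv a b = dotv b a.
Proof. by rewrite /dotv -[b in RHS]trmxK -trmx_mul [RHS]mxE. Qed.

Lemma dotvDr a b c : dotv a (b + c) = dotv a b + dotv a c.
Proof. by rewrite /dotv linearD /= mulmxDr mxE. Qed.

Lemma dotv0r a : dotv a 0 = 0.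
Proof. by rewrite /dotv trmx0 mulmx0 mxE. Qed.

Lemma dotvZr a b (s : R) : dotv a (s *: b) = s * dotv a b.
Proof. by rewrite /dotv linearZ /= -scalemxAr mxE. Qed.

Lemma dotv_sumr (I : Type) (r : seq I) (P : pred I) a (F : I -> 'rV[R]_d) :
  dotv a (\sum_(l <- r | P l) F l) = \sum_(l <- r | P l) dotv a (F l).
Proof. by elim/big_rec2: _ => [|l x y _ IH]; rewrite ?dotv0r ?dotvDr ?IH. Qed.

Lemma mulmx_trC_dotv a b : a *m b^T = (dotv a b)%:M.
Proof. by rewrite {1}[a *m b^T]mx11_scalar. Qed.

Lemma mulmx_gd_step (W : 'M[R]_d) a kj vj :
  a *m gd_step W (kj, vj) = a *m W - dotv a kj *: (kj *m W - vj).
Proof.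
rewrite /gd_step /= mulmxDr mulmxBr !mulmxA mulmx_trC_dotv !mul_scalar_mx.
by rewrite -scalemxAl scalerBr opprB [RHS]addrA addrAC.
Qed.

End InnerProduct.

Section Sweep.
Variables (R : realDomainType) (m : nat) (eps : R) (G : 'I_m -> 'I_m -> R).
Implicit Types (E : 'I_m -> 'I_m -> R) (i j : 'I_m).

Definition rownorm1 E i := \sum_l `|E i l|.

Definition norm1 E := \sum_i rownorm1 E i.

(* With [G] the Gram matrix of the keys, this is how a delta-rule step on key
   [j] acts on the readout coefficients (see [readout_gd_step]). *)
Definition sweep E j := fun i l => E i l - G i j * E j l.

Definition shrink := 1 - (m%:R - 1) * eps.

Definition potential E i := shrink * rownorm1 E i + eps * norm1 E.

Lemma sumr_const_neq j (x : R) : \sum_(i < m | i != j) x = (m%:R - 1) * x.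
Proof.
have m0 : (0 < m)%N := leq_ltn_trans (leq0n _) (ltn_ord j).
by rewrite sumr_const cardC1 card_ord -subn1 -[x *+ _]mulr_natl natrB.
Qed.

Lemma rownorm1_ge0 E i : 0 <= rownorm1 E i.
Proof. exact: sumr_ge0. Qed.

Lemma norm1_ge0 E : 0 <= norm1 E.
Proof. by apply: sumr_ge0 => i _; apply: rownorm1_ge0. Qed.

Hypothesis G_diag : forall j, G j j = 1.
Hypothesis G_offdiag : forall i j, i != j -> `|G i j| <= eps.

Lemma rownorm1_sweep_self E j : rownorm1 (sweep E j) j = 0.
Proof. by apply: big1 => l _; rewrite /sweep G_diag mul1r subrr normr0. Qed.

Lemma rownorm1_sweep E i j : i != j ->
  rownorm1 (sweep E j) i <= rownorm1 E i + eps * rownorm1 E j.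
Proof.
move=> ij; rewrite /rownorm1 mulr_sumr -big_split /=; apply: ler_sum => l _.
rewrite (le_trans (ler_normB _ _)) // lerD2l normrM.
by rewrite ler_wpM2r ?G_offdiag.
Qed.

Lemma norm1_sweep E j : norm1 (sweep E j) <= norm1 E - shrink * rownorm1 E j.
Proof.
rewrite /norm1 (bigD1 j) //= rownorm1_sweep_self add0r [X in X - _](bigD1 j) //=.
have others : \sum_(i < m | i != j) rownorm1 (sweep E j) i <=
    \sum_(i < m | i != j) rownorm1 E i + (m%:R - 1) * (eps * rownorm1 E j).
  rewrite (le_trans (ler_sum _ (fun i ij => rownorm1_sweep E ij))) //.
  by rewrite big_split /= sumr_const_neq.
by rewrite (le_trans others) // /shrink; lra.
Qed.

Hypothesis eps_ge0 : 0 <= eps.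
Hypothesis shrink_ge0 : 0 <= shrink.

Lemma potential_sweep_self E j : potential (sweep E j) j <= eps * norm1 E.
Proof.
rewrite /potential rownorm1_sweep_self mulr0 add0r ler_wpM2l //.
by rewrite (le_trans (norm1_sweep E j)) // lerBlDr lerDl mulr_ge0 ?rownorm1_ge0.
Qed.

Lemma potential_sweep E i j : potential (sweep E j) i <= potential E i.
Proof.
have [-> | ij] := eqVneq i j.
  by rewrite (le_trans (potential_sweep_self E j)) // lerDr mulr_ge0 ?rownorm1_ge0.
have grow := ler_wpM2l shrink_ge0 (rownorm1_sweep E ij).
have decay := ler_wpM2l eps_ge0 (norm1_sweep E j).
rewrite /potential; lra.
Qed.

Lemma rownorm1_lt_of_potential E i :
  (m%:R - 1) * (eps * m%:R) < shrink -> potential E i <= eps * m%:R ->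
  (m%:R - 1) * rownorm1 E i < 1.
Proof.
have m1 : 0 <= m%:R - 1 :> R.
  by rewrite subr_ge0 ler1n (leq_ltn_trans (leq0n i) (ltn_ord i)).
move=> margin bounded; have mass := mulr_ge0 eps_ge0 (norm1_ge0 E).
have shrink_pos : 0 < shrink.
  exact: le_lt_trans (mulr_ge0 m1 (mulr_ge0 eps_ge0 (ler0n _ _))) margin.
rewrite -(ltr_pM2l shrink_pos) mulr1 mulrCA.
have seen : shrink * rownorm1 E i <= eps * m%:R.
  by move: bounded; rewrite /potential; lra.
exact: le_lt_trans (ler_wpM2l m1 seen) margin.
Qed.

End Sweep.

Section DeltaRule.
Variables (R : realType) (d m : nat) (k v : 'I_m -> 'rV[R]_d) (eps : R).
Hypothesis k_inj : injective k.
Hypothesis k_JL : eps_JL k eps.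
Hypothesis eps_ge0 : 0 <= eps.
Hypothesis shrink_ge0 : 0 <= shrink m eps.

Let gram i j := dotv (k i) (k j).

Definition readout (W : 'M[R]_d) (E : 'I_m -> 'I_m -> R) :=
  forall i, k i *m W = v i + \sum_l E i l *: v l.

Lemma readout0 : readout 0 (fun i l => - (i == l)%:R).
Proof.
move=> i; rewrite mulmx0 (bigD1 i) //= eqxx scaleN1r big1 ?addr0 ?subrr //.
by move=> l li; rewrite eq_sym (negbTE li) oppr0 scale0r.
Qed.

Lemma readout_gd_step W E j :
  readout W E -> readout (gd_step W (k j, v j)) (sweep gram E j).
Proof.
move=> hW i; rewrite mulmx_gd_step !hW [v j + _ - _]addrAC subrr add0r.
rewrite [X in _ = _ + X](eq_bigr (fun l => E i l *: v l - gram i j *: (E j l *: v l))).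
  by rewrite sumrB -scaler_sumr addrA.
by move=> l _; rewrite scalerBl scalerA.
Qed.

Lemma gd_readout_invariant (p : seq ('rV[R]_d * 'rV[R]_d)) :
  (forall x, x \in p -> exists j, x = (k j, v j)) ->
  exists E, [/\ readout (foldl (@gd_step R d) 0 p) E, norm1 E <= m%:R &
    forall i, (k i, v i) \in p -> potential eps E i <= eps * m%:R].
Proof.
have [k_unit k_cross] := k_JL.
have gram_diag j : gram j j = 1 by exact: k_unit.
elim/last_ind: p => [_ | p x IH inS].
  exists (fun i l => - (i == l)%:R); split=> //; first exact: readout0.
  rewrite /norm1 (eq_bigr (fun=> 1)) ?sumr_const ?card_ord // => i _.
  rewrite /rownorm1 (bigD1 i) //= eqxx normrN normr1 big1 ?addr0 // => l li.
  by rewrite eq_sym (negbTE li) oppr0 normr0.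
case: IH => [y yp | E [hW E_mass E_seen]].
  by apply: inS; rewrite mem_rcons in_cons yp orbT.
have [j ->] : exists j, x = (k j, v j) by apply: inS; rewrite mem_rcons mem_head.
have mono := potential_sweep gram_diag k_cross eps_ge0 shrink_ge0 E.
have wiped := potential_sweep_self gram_diag k_cross eps_ge0 shrink_ge0 E j.
exists (sweep gram E j); split.
- by rewrite foldl_rcons; apply: readout_gd_step.
- rewrite (le_trans (norm1_sweep gram_diag k_cross E j)) // lerBlDr.
  by rewrite ler_wpDr // mulr_ge0 ?rownorm1_ge0.
- move=> i; rewrite mem_rcons in_cons => /orP [/eqP [/k_inj -> _] | ip].
    by rewrite (le_trans wiped) ?ler_wpM2l.
  exact: le_trans (mono i j) (E_seen i ip).
Qed.

End DeltaRule.

Section Decoding.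
Variables (R : realType) (d m : nat) (v : 'I_m -> 'rV[R]_d) (alpha : R).
Hypothesis m_ge2 : (2 <= m)%N.
Hypothesis v_unit : forall i, dotv (v i) (v i) = 1.
Hypothesis v_cross : forall i j, i != j -> `|dotv (v i) (v j)| <= alpha.
Hypothesis alpha_lt : alpha < (m%:R - 1) / (m%:R + 1).

Let m_ge2R : 2 <= m%:R :> R. Proof. by rewrite (ler_nat R 2 m). Qed.

Let alpha_margin : alpha * (m%:R + 1) < m%:R - 1.
Proof. by rewrite -ltr_pdivlMr //; have := m_ge2R; lra. Qed.

Lemma dotv_gap_pos i b : b != i -> 0 < 1 - dotv (v b) (v i).
Proof.
move=> bi; have /ler_normlP[_ hbi] := v_cross bi.
have := alpha_margin; have := m_ge2R; nra.
Qed.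

(* Since [2 alpha <= (m-1)(1 - alpha)], every score difference is dominated by
   [m-1] times the gap between the scores of [v_i] and [v_b] on [v_i] itself. *)
Lemma dotv_diff_le_gap i b l : b != i ->
  `|dotv (v i) (v l) - dotv (v b) (v l)| <= (m%:R - 1) * (1 - dotv (v b) (v i)).
Proof.
move=> bi; have gap := dotv_gap_pos bi; have m2 := m_ge2R.
have [-> | li] := eqVneq l i.
  by rewrite v_unit ger0_norm; nra.
have [-> | lb] := eqVneq l b.
  by rewrite v_unit dotvC -opprB normrN ger0_norm; nra.
have /ler_normlP[_ hbi] := v_cross bi.
have /ler_normlP[h1 h1'] := v_cross li; have /ler_normlP[h2 h2'] := v_cross lb.
have := alpha_margin; rewrite (dotvC (v i)) (dotvC (v b)).
by move=> margin; apply/ler_normlP; split; nra.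
Qed.

Lemma dotv_readout_lt i b (e : 'I_m -> R) : b != i ->
  (m%:R - 1) * \sum_l `|e l| < 1 ->
  dotv (v b) (v i + \sum_l e l *: v l) < dotv (v i) (v i + \sum_l e l *: v l).
Proof.
move=> bi small; set gap := 1 - dotv (v b) (v i).
have gap_pos : 0 < gap := dotv_gap_pos bi.
rewrite -subr_gt0 !dotvDr !dotv_sumr v_unit.
under eq_bigr do rewrite dotvZr.
under [X in _ - (_ + X)]eq_bigr do rewrite dotvZr.
rewrite opprD addrACA -sumrB.
under eq_bigr do rewrite -mulrBr.
set D := \sum_l _.
have D_le : `|D| <= (\sum_l `|e l|) * ((m%:R - 1) * gap).
  rewrite mulr_suml (le_trans (ler_norm_sum _ _ _)) //.
  by apply: ler_sum => l _; rewrite normrM ler_wpM2l ?dotv_diff_le_gap.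
have /ler_normlP[D_ge _] := D_le.
have : gap * ((m%:R - 1) * \sum_l `|e l|) < gap by rewrite -[X in _ < X]mulr1 ltr_pM2l.
rewrite -/gap; lra.
Qed.

End Decoding.

Lemma decodes_to_strict (R : realType) (d m : nat) (v : 'I_m -> 'rV[R]_d)
    (q : 'rV[R]_d) (W : 'M[R]_d) i :
  (forall b, b != i -> dotv (v b) (q *m W) < dotv (v i) (q *m W)) ->
  decodes_to v q W (v i).
Proof.
move=> strict b bmax; have [-> // | bi] := eqVneq b i.
by have := bmax i; rewrite leNgt strict.
Qed.

Lemma eps_JL_ge0 (R : realType) (d m : nat) (k : 'I_m -> 'rV[R]_d) (eps : R) :
  (2 <= m)%N -> eps_JL k eps -> 0 <= eps.
Proof.
move=> m2 [_ k_cross]; have m0 : (0 < m)%N := ltnW m2.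
have ne : Ordinal m0 != Ordinal m2 :> 'I_m by [].
exact: le_trans (normr_ge0 _) (k_cross _ _ ne).
Qed.

Lemma shrink_margin (R : realFieldType) (m : nat) (eps : R) : (2 <= m)%N ->
  0 <= eps -> eps <= 1 / ((m ^ 2 * (m - 1))%N%:R) ->
  (m%:R - 1) * (eps * m%:R) < shrink m eps.
Proof.
move=> m2 e0; rewrite natrM natrX natrB ?(ltnW m2) // /shrink.
have M2 : 2 <= m%:R :> R by rewrite (ler_nat R 2 m).
rewrite ler_pdivlMr ?mulr_gt0 ?exprn_gt0 //; try lra.
nra.
Qed.

Theorem mainTheorem6 (R : realType) (d m : nat) (k v : 'I_m -> 'rV[R]_d)
    (eps alpha : R) :
  (2 <= m)%N ->
  injective k ->
  eps_JL k eps ->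
  eps <= 1 / ((m ^ 2 * (m - 1))%N%:R) ->
  (forall i, dotv (v i) (v i) = 1) ->
  (forall i j, i != j -> `|dotv (v i) (v j)| <= alpha) ->
  alpha < (m%:R - 1) / (m%:R + 1) ->
  forall st : seq ('rV[R]_d * 'rV[R]_d),
    mqar_stream k v st ->
    forall (t : nat) (i : 'I_m),
      (t <= size st)%N ->
      (0 < rcount st (k i, v i) t)%N ->
      decodes_to v (k i) (gd_state st t) (v i).
Proof.
move=> m2 k_inj k_JL eps_le v_unit v_cross alpha_lt st in_st t i _ seen.
have eps_ge0 := eps_JL_ge0 m2 k_JL.
have margin := shrink_margin m2 eps_ge0 eps_le.
have m1 : 0 <= m%:R - 1 :> R by rewrite subr_ge0 ler1n ltnW.
have shrink_ge0 : 0 <= shrink m eps.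
  exact: le_trans (mulr_ge0 m1 (mulr_ge0 eps_ge0 (ler0n _ _))) (ltW margin).
have [E [readW _ bounded]] := gd_readout_invariant (v := v) (p := take t st)
  k_inj k_JL eps_ge0 shrink_ge0 (fun x xp => in_st x (mem_take xp)).
have seen_i : (k i, v i) \in take t st by rewrite -has_pred1 has_count.
have small := rownorm1_lt_of_potential eps_ge0 margin (bounded i seen_i).
apply: decodes_to_strict => b bi; rewrite readW.
exact: (@dotv_readout_lt _ _ _ _ _ m2 v_unit v_cross alpha_lt _ _ (E i) bi small).
Qed.
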